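(* Let $I\subset\mathbb R$ be a compact interval containing $0$ in its interior and consider the planar slow-fast system $$\dot x=\epsilon f(x,y,\epsilon),\qquad \dot y=y\,h(x,y,\epsilon),$$ with $f,h$ $C^\infty$-smooth, $\epsilon\ge 0$ small. Assume $x\,h(x,0,0)<0$ for all $x\in I\setminus\{0\}$ and $\frac{\partial h}{\partial x}(0,0,0)<0$. Then there exists a smooth $\epsilon$-family of coordinate changes which, in a neighbourhood of $I\times\{0\}\subset\mathbb R^2$ and up to multiplication of the vector field by a smooth positive function, brings the system into the form $$\dot x=\epsilon f_0(x,\epsilon)+y\,g_0(x,y,\epsilon),\qquad \dot y=-xy,$$ for some smooth functions $f_0,g_0$ with $g_0(0,0,0)=0$.
   Context: All functions are $C^\infty$. ''Smooth $\epsilon$-family of coordinate changes'' means a diffeomorphism in $(x,y)$ depending smoothly on the parameter $\epsilon$ for $\epsilon\ge0$ small. *)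

From Stdlib Require Import Reals.
From Coquelicot Require Import Coquelicot.
Open Scope R_scope.

(* Functions of (x, y, eps), curried. *)
Definition fun3 := R -> R -> R -> R.

Definition D1 (f : fun3) : fun3 := fun x y e => Derive (fun t => f t y e) x.
Definition D2 (f : fun3) : fun3 := fun x y e => Derive (fun t => f x t e) y.
Definition D3 (f : fun3) : fun3 := fun x y e => Derive (fun t => f x y t) e.

Definition continuous3 (f : fun3) : Prop :=
  forall x y e,
    continuous (fun p : R * R * R => f (fst (fst p)) (snd (fst p)) (snd p)) (x, y, e).

Definition has_partials3 (f : fun3) : Prop :=
  forall x y e,
    ex_derive (fun t => f t y e) x /\
    ex_derive (fun t => f x t e) y /\
    ex_derive (fun t => f x y t) e.

Fixpoint Cn3 (n : nat) (f : fun3) : Prop :=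
  match n with
  | O => continuous3 f
  | S m => continuous3 f /\ has_partials3 f /\
           Cn3 m (D1 f) /\ Cn3 m (D2 f) /\ Cn3 m (D3 f)
  end.

Definition smooth3 (f : fun3) : Prop := forall n, Cn3 n f.

Definition open2 (U : R -> R -> Prop) : Prop :=
  forall x y, U x y -> exists d, 0 < d /\
    forall x' y', Rabs (x' - x) < d -> Rabs (y' - y) < d -> U x' y'.

(* The fast nullcline [h = 0] near [I x {0}] is a graph [x = p (y, e)] by the implicit function
   theorem, since [D1 h < 0] at the origin; cutting [h] off in [y] and [e] makes [p] globally
   defined and smooth.  Hadamard's lemma writes [h = (x - p) Df] with [Df] smooth, equal to
   [h (x, 0, 0) / x] on [I \ {0}] and to [D1 h (0, 0, 0)] at [0], hence negative near [I x {0}].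
   Multiplying the field by [K = - 1 / Df] turns [y h] into [- y (x - p)], so that the shear
   [X = x - p (y, e)], [Y = y] gives [Y' = - X Y] and [X' = e A (X, Y, e) + X Y D2 p], where [A]
   is [K f] in the new coordinates.  Hadamard's lemma in [Y], [A (X, Y, e) = A (X, 0, e) + Y M],
   then yields [f0 = A (., 0, .)] and [g0 = e M + X D2 p], which vanishes at the origin.

   Smoothness is proved by induction on the order of differentiability, using the chain rule
   and the fact that Hadamard's integrals are closed under differentiation; the cutoffs are
   built from [exp (- 1 / s)]. *)

From Stdlib Require Import Reals Lra List FunctionalExtensionality ClassicalEpsilon.
From Coquelicot Require Import Coquelicot.
Open Scope R_scope.

(** * Continuity on R^3 *)

Lemma continuous_comp3 {U : UniformSpace} (G : fun3) (u v w : U -> R) (z : U) :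
  continuous3 G -> continuous u z -> continuous v z -> continuous w z ->
  continuous (fun z => G (u z) (v z) (w z)) z.
Proof.
intros HG Hu Hv Hw.
apply (continuous_comp_2 (fun z => (u z, v z)) w (fun p q => G (fst p) (snd p) q));
  [| exact Hw | apply HG].
apply (continuous_comp_2 u v pair); [exact Hu | exact Hv |].
apply (continuous_ext (fun p : R * R => p)); [intros []; reflexivity | apply continuous_id].
Qed.

Lemma continuous3_comp (G u v w : fun3) :
  continuous3 G -> continuous3 u -> continuous3 v -> continuous3 w ->
  continuous3 (fun x y e => G (u x y e) (v x y e) (w x y e)).
Proof. intros HG Hu Hv Hw x y e. now apply continuous_comp3. Qed.

Lemma continuous3_inv f : (forall x y e, f x y e <> 0) -> continuous3 f ->
  continuous3 (fun x y e => / f x y e).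
Proof.
intros Hnz Hf x y e.
apply (continuous_comp (fun p : R * R * R => f (fst (fst p)) (snd (fst p)) (snd p)) Rinv);
  [apply Hf | apply continuity_pt_filterlim, continuity_pt_inv;
              [apply continuity_pt_id | apply Hnz]].
Qed.

Lemma continuous3_ball f : continuous3 f <-> forall x y e eps, 0 < eps -> exists d, 0 < d /\
  forall x' y' e', Rabs (x' - x) < d -> Rabs (y' - y) < d -> Rabs (e' - e) < d ->
  Rabs (f x' y' e' - f x y e) < eps.
Proof.
split.
- intros H x y e eps Heps.
  destruct (proj1 (filterlim_locally _ _) (H x y e) (mkposreal eps Heps)) as [d Hd].
  exists d. split; [apply cond_pos |]. intros x' y' e' H1 H2 H3. apply (Hd (x', y', e')).
  repeat split; assumption.
- intros H x y e. apply filterlim_locally. intros eps.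
  destruct (H x y e eps (cond_pos eps)) as [d [Hd H']].
  exists (mkposreal d Hd). intros [[x' y'] e'] [[H1 H2] H3]. apply H'; assumption.
Qed.

Lemma continuous_pow k (x : R) : continuous (fun t => t ^ k) x.
Proof. apply continuity_pt_filterlim, derivable_continuous_pt, derivable_pt_pow. Qed.

Definition uncurry3 (f : fun3) (z : R * R * R) : R := f (fst (fst z)) (snd (fst z)) (snd z).

Lemma continuous_uncurry3 (f : fun3) (z : R * R * R) : continuous3 f -> continuous (uncurry3 f) z.
Proof. destruct z as [[x y] e]. intros Hf. apply Hf. Qed.

(* The division case leaves the nonvanishing of the denominator as a side goal. *)
Ltac solve_continuous :=
  match goal with
  | |- continuous (fun _ => ?c) _ => apply continuous_const
  | |- continuous (fun q => q) _ => apply continuous_id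
  | |- continuous (fun q => fst q) _ => apply continuous_fst
  | |- continuous (fun q => snd q) _ => apply continuous_snd
  | |- continuous (fun q => fst (@?f q)) _ =>
      apply (continuous_comp f fst); [solve_continuous | apply continuous_fst]
  | |- continuous (fun q => snd (@?f q)) _ =>
      apply (continuous_comp f snd); [solve_continuous | apply continuous_snd]
  | |- continuous (fun q => - @?f q) _ => apply (continuous_opp f); solve_continuous
  | |- continuous (fun q => @?f q / @?g q) _ =>
      apply (continuous_mult f (fun q => / g q)); [solve_continuous |];
      apply (continuous_comp g Rinv); [solve_continuous |];
      apply continuity_pt_filterlim, continuity_pt_inv; [apply continuity_pt_id |]
  | |- continuous (fun q => @?f q + @?g q) _ =>
      apply (continuous_plus f g); solve_continuous
  | |- continuous (fun q => @?f q * @?g q) _ =>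
      apply (continuous_mult f g); solve_continuous
  | |- continuous (fun q => @?f q ^ ?k) _ =>
      apply (continuous_comp f (fun r => r ^ k)); [solve_continuous | apply continuous_pow]
  | |- continuous (fun q => ?G (@?u q) (@?v q) (@?w q)) _ =>
      apply (continuous_comp3 G u v w); [assumption | solve_continuous ..]
  | |- continuous (fun q => uncurry3 ?f (fst q)) _ =>
      apply (continuous_comp fst (uncurry3 f));
      [apply continuous_fst | apply continuous_uncurry3; assumption]
  | |- continuous (fun q => ?f (fst q)) _ =>
      apply (continuous_comp fst f); [apply continuous_fst | solve [auto]]
  end.

Lemma continuous3_fst : continuous3 (fun x _ _ => x).
Proof. intros x y e. solve_continuous. Qed.

Lemma continuous3_snd : continuous3 (fun _ y _ => y).
Proof. intros x y e. solve_continuous. Qed.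

Lemma continuous3_thd : continuous3 (fun _ _ e => e).
Proof. intros x y e. solve_continuous. Qed.

Lemma continuous3_const c : continuous3 (fun _ _ _ => c).
Proof. intros x y e. solve_continuous. Qed.

Lemma continuous_line1 (f : fun3) x y e : continuous3 f -> continuous (fun t => f t y e) x.
Proof. intros Hf. solve_continuous. Qed.

Lemma continuous_line2 (f : fun3) x y e : continuous3 f -> continuous (fun t => f x t e) y.
Proof. intros Hf. solve_continuous. Qed.

Lemma continuous_line3 (f : fun3) x y e : continuous3 f -> continuous (fun t => f x y t) e.
Proof. intros Hf. solve_continuous. Qed.

(** * The chain rule *)

Lemma differentiable_of_partials (F : R -> R -> R) x y :
  (forall u v, ex_derive (fun t => F t v) u) -> ex_derive (fun t => F x t) y ->
  continuous (fun p : R * R => Derive (fun t => F t (snd p)) (fst p)) (x, y) ->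
  differentiable_pt_lim F x y (Derive (fun t => F t y) x) (Derive (fun t => F x t) y).
Proof.
intros H1 H2 HC. apply filterdiff_differentiable_pt_lim.
apply (is_derive_filterdiff F x y (fun u v => Derive (fun t => F t v) u)); [| |exact HC].
- apply filter_forall. intros [u v]. apply Derive_correct, H1.
- apply Derive_correct, H2.
Qed.

Lemma is_derive_continuous (f : R -> R) x l : is_derive f x l -> continuous f x.
Proof. intros H. apply (ex_derive_continuous f x). now exists l. Qed.

Lemma is_derive_comp3 (G : fun3) (a b c : R -> R) s a' b' c' :
  has_partials3 G -> continuous3 (D1 G) -> continuous3 (D2 G) ->
  is_derive a s a' -> is_derive b s b' -> is_derive c s c' ->
  is_derive (fun t => G (a t) (b t) (c t)) s
    (D1 G (a s) (b s) (c s) * a' + D2 G (a s) (b s) (c s) * b'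
     + D3 G (a s) (b s) (c s) * c').
Proof.
intros HP C1 C2 Ha Hb Hc.
(* Two planar chain rules: in [(y, e)] at [x = a s], then for [(z, w) |-> G z (b w) (c w)]. *)
assert (Hbc : is_derive (fun w => G (a s) (b w) (c w)) s
   (D2 G (a s) (b s) (c s) * b' + D3 G (a s) (b s) (c s) * c')).
{ apply is_derive_Reals, (derivable_pt_lim_comp_2d (G (a s))); try now apply is_derive_Reals.
  apply differentiable_of_partials.
  - intros u v. apply (HP (a s) u v).
  - apply (HP (a s) (b s) (c s)).
  - apply (continuous_comp3 (D2 G) (fun _ => a s) fst snd);
      [exact C2 | apply continuous_const | apply continuous_fst | apply continuous_snd]. }
apply is_derive_Reals.
replace (_ + _ + _) with (D1 G (a s) (b s) (c s) * a'
  + (D2 G (a s) (b s) (c s) * b' + D3 G (a s) (b s) (c s) * c') * 1) by ring.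
apply (derivable_pt_lim_comp_2d (fun z w => G z (b w) (c w)) a id);
  [| now apply is_derive_Reals | apply derivable_pt_lim_id].
rewrite <- (is_derive_unique _ _ _ Hbc).
apply differentiable_of_partials.
- intros u v. apply (HP u (b v) (c v)).
- now exists (D2 G (a s) (b s) (c s) * b' + D3 G (a s) (b s) (c s) * c').
- apply (continuous_comp3 (D1 G) fst (fun p => b (snd p)) (fun p => c (snd p)));
    [exact C1 | apply continuous_fst | |].
  + apply (continuous_comp snd b); [apply continuous_snd | exact (is_derive_continuous b s b' Hb)].
  + apply (continuous_comp snd c); [apply continuous_snd | exact (is_derive_continuous c s c' Hc)].
Qed.

(** * Smooth functions of three variables *)

Ltac solve_derive := intros; auto_derive; try easy; ring.

Lemma fun3_ext (f g : fun3) : (forall x y e, f x y e = g x y e) -> f = g.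
Proof. intros H. do 3 (apply functional_extensionality; intro). apply H. Qed.

Lemma Cn3_continuous n f : Cn3 n f -> continuous3 f.
Proof. destruct n; [easy | intros [H _]; exact H]. Qed.

Lemma Cn3_pred n f : Cn3 (S n) f -> Cn3 n f.
Proof.
revert f; induction n as [|n IH]; intros f [Hc [HP [H1 [H2 H3]]]]; [exact Hc|].
exact (conj Hc (conj HP (conj (IH _ H1) (conj (IH _ H2) (IH _ H3))))).
Qed.

Lemma smooth3_continuous f : smooth3 f -> continuous3 f.
Proof. intros H. exact (H O). Qed.

Lemma smooth3_has_partials f : smooth3 f -> has_partials3 f.
Proof. intros H. apply (H 1%nat). Qed.

Lemma is_derive_D1 f x y e : has_partials3 f -> is_derive (fun t => f t y e) x (D1 f x y e).
Proof. intros H. apply Derive_correct, (proj1 (H x y e)). Qed.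

Lemma is_derive_D2 f x y e : has_partials3 f -> is_derive (fun t => f x t e) y (D2 f x y e).
Proof. intros H. apply Derive_correct, (proj1 (proj2 (H x y e))). Qed.

Lemma is_derive_D3 f x y e : has_partials3 f -> is_derive (fun t => f x y t) e (D3 f x y e).
Proof. intros H. apply Derive_correct, (proj2 (proj2 (H x y e))). Qed.

Lemma smooth3_D1 f : smooth3 f -> smooth3 (D1 f).
Proof. intros H n. apply (H (S n)). Qed.

Lemma smooth3_D2 f : smooth3 f -> smooth3 (D2 f).
Proof. intros H n. apply (H (S n)). Qed.

Lemma smooth3_D3 f : smooth3 f -> smooth3 (D3 f).
Proof. intros H n. apply (H (S n)). Qed.

Lemma Cn3_succ n (f d1 d2 d3 : fun3) :
  continuous3 f ->
  (forall x y e, is_derive (fun t => f t y e) x (d1 x y e)) ->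
  (forall x y e, is_derive (fun t => f x t e) y (d2 x y e)) ->
  (forall x y e, is_derive (fun t => f x y t) e (d3 x y e)) ->
  Cn3 n d1 -> Cn3 n d2 -> Cn3 n d3 -> Cn3 (S n) f.
Proof.
intros Hc H1 H2 H3 C1 C2 C3.
split; [exact Hc |]. split; [intros x y e; repeat split; eexists; eauto |].
replace (D1 f) with d1 by (apply fun3_ext; intros; symmetry; apply is_derive_unique, H1).
replace (D2 f) with d2 by (apply fun3_ext; intros; symmetry; apply is_derive_unique, H2).
replace (D3 f) with d3 by (apply fun3_ext; intros; symmetry; apply is_derive_unique, H3).
auto.
Qed.

Lemma smooth3_of_partials (f d1 d2 d3 : fun3) :
  continuous3 f ->
  (forall x y e, is_derive (fun t => f t y e) x (d1 x y e)) ->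
  (forall x y e, is_derive (fun t => f x t e) y (d2 x y e)) ->
  (forall x y e, is_derive (fun t => f x y t) e (d3 x y e)) ->
  smooth3 d1 -> smooth3 d2 -> smooth3 d3 -> smooth3 f.
Proof. intros Hc H1 H2 H3 S1 S2 S3 [|n]; [exact Hc | now apply (Cn3_succ n f d1 d2 d3)]. Qed.

Lemma smooth3_const c : smooth3 (fun _ _ _ => c).
Proof.
intro n; revert c; induction n as [|n IH]; intro c; [apply continuous3_const|].
apply (Cn3_succ n _ (fun _ _ _ => 0) (fun _ _ _ => 0) (fun _ _ _ => 0));
  auto using continuous3_const; solve_derive.
Qed.

Lemma smooth3_fst : smooth3 (fun x _ _ => x).
Proof.
apply (smooth3_of_partials _ (fun _ _ _ => 1) (fun _ _ _ => 0) (fun _ _ _ => 0));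
  auto using continuous3_fst, smooth3_const; solve_derive.
Qed.

Lemma smooth3_snd : smooth3 (fun _ y _ => y).
Proof.
apply (smooth3_of_partials _ (fun _ _ _ => 0) (fun _ _ _ => 1) (fun _ _ _ => 0));
  auto using continuous3_snd, smooth3_const; solve_derive.
Qed.

Lemma smooth3_thd : smooth3 (fun _ _ e => e).
Proof.
apply (smooth3_of_partials _ (fun _ _ _ => 0) (fun _ _ _ => 0) (fun _ _ _ => 1));
  auto using continuous3_thd, smooth3_const; solve_derive.
Qed.

Lemma smooth3_add_map : smooth3 (fun a b _ => a + b).
Proof.
apply (smooth3_of_partials _ (fun _ _ _ => 1) (fun _ _ _ => 1) (fun _ _ _ => 0));
  auto using smooth3_const; try solve_derive.
intros x y e. solve_continuous.
Qed.

Lemma smooth3_mul_map : smooth3 (fun a b _ => a * b).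
Proof.
apply (smooth3_of_partials _ (fun _ b _ => b) (fun a _ _ => a) (fun _ _ _ => 0));
  auto using smooth3_const, smooth3_fst, smooth3_snd; try solve_derive.
intros x y e. solve_continuous.
Qed.

Lemma Cn3_comp n : forall G u v w, smooth3 G -> Cn3 n u -> Cn3 n v -> Cn3 n w ->
  Cn3 n (fun x y e => G (u x y e) (v x y e) (w x y e)).
Proof.
induction n as [|n IH]; intros G u v w HG Hu Hv Hw.
{ apply continuous3_comp; auto using smooth3_continuous. }
set (GD := fun (D : fun3 -> fun3) x y e => D G (u x y e) (v x y e) (w x y e)).
(* Closure under [+] and [*] at level [n] is the induction hypothesis for the smooth maps
   [(a, b, _) |-> a + b] and [(a, b, _) |-> a * b]. *)
assert (Hsum : forall A B : fun3, Cn3 n A -> Cn3 n B -> Cn3 n (fun x y e => A x y e + B x y e))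
  by (intros A B HA HB; exact (IH _ A B A smooth3_add_map HA HB HA)).
assert (Hprod : forall A B : fun3, Cn3 n A -> Cn3 n B -> Cn3 n (fun x y e => A x y e * B x y e))
  by (intros A B HA HB; exact (IH _ A B A smooth3_mul_map HA HB HA)).
assert (HGD : forall D, smooth3 (D G) -> Cn3 n (GD D))
  by (intros D HD; unfold GD; apply IH; auto using Cn3_pred).
destruct Hu as [Cu [Pu [U1 [U2 U3]]]], Hv as [Cv [Pv [V1 [V2 V3]]]], Hw as [Cw [Pw [W1 [W2 W3]]]].
assert (HP := smooth3_has_partials G HG).
assert (C1 := smooth3_continuous _ (smooth3_D1 G HG)).
assert (C2 := smooth3_continuous _ (smooth3_D2 G HG)).
apply (Cn3_succ n _
  (fun x y e => GD D1 x y e * D1 u x y e + GD D2 x y e * D1 v x y e + GD D3 x y e * D1 w x y e)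
  (fun x y e => GD D1 x y e * D2 u x y e + GD D2 x y e * D2 v x y e + GD D3 x y e * D2 w x y e)
  (fun x y e => GD D1 x y e * D3 u x y e + GD D2 x y e * D3 v x y e + GD D3 x y e * D3 w x y e)).
- apply continuous3_comp; auto using smooth3_continuous.
- intros x y e. apply (is_derive_comp3 G (fun t => u t y e) (fun t => v t y e) (fun t => w t y e));
    try assumption; apply is_derive_D1; assumption.
- intros x y e. apply (is_derive_comp3 G (fun t => u x t e) (fun t => v x t e) (fun t => w x t e));
    try assumption; apply is_derive_D2; assumption.
- intros x y e. apply (is_derive_comp3 G (fun t => u x y t) (fun t => v x y t) (fun t => w x y t));
    try assumption; apply is_derive_D3; assumption.
- apply Hsum; [apply Hsum |]; apply Hprod; auto using smooth3_D1, smooth3_D2, smooth3_D3.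
- apply Hsum; [apply Hsum |]; apply Hprod; auto using smooth3_D1, smooth3_D2, smooth3_D3.
- apply Hsum; [apply Hsum |]; apply Hprod; auto using smooth3_D1, smooth3_D2, smooth3_D3.
Qed.

Lemma Cn3_plus n f g : Cn3 n f -> Cn3 n g -> Cn3 n (fun x y e => f x y e + g x y e).
Proof. intros Hf Hg. exact (Cn3_comp n _ f g f smooth3_add_map Hf Hg Hf). Qed.

Lemma Cn3_mult n f g : Cn3 n f -> Cn3 n g -> Cn3 n (fun x y e => f x y e * g x y e).
Proof. intros Hf Hg. exact (Cn3_comp n _ f g f smooth3_mul_map Hf Hg Hf). Qed.

Lemma smooth3_comp G u v w : smooth3 G -> smooth3 u -> smooth3 v -> smooth3 w ->
  smooth3 (fun x y e => G (u x y e) (v x y e) (w x y e)).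
Proof. intros HG Hu Hv Hw n. now apply Cn3_comp. Qed.

Lemma smooth3_plus f g : smooth3 f -> smooth3 g -> smooth3 (fun x y e => f x y e + g x y e).
Proof. intros Hf Hg n. now apply Cn3_plus. Qed.

Lemma smooth3_mult f g : smooth3 f -> smooth3 g -> smooth3 (fun x y e => f x y e * g x y e).
Proof. intros Hf Hg n. now apply Cn3_mult. Qed.

Lemma smooth3_opp_map : smooth3 (fun a _ _ => - a).
Proof.
apply (smooth3_of_partials _ (fun _ _ _ => -1) (fun _ _ _ => 0) (fun _ _ _ => 0));
  auto using smooth3_const; try solve_derive.
intros x y e. solve_continuous.
Qed.

Lemma Cn3_opp n f : Cn3 n f -> Cn3 n (fun x y e => - f x y e).
Proof. intros Hf. exact (Cn3_comp n _ f f f smooth3_opp_map Hf Hf Hf). Qed.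

Lemma smooth3_opp f : smooth3 f -> smooth3 (fun x y e => - f x y e).
Proof. intros Hf n. now apply Cn3_opp. Qed.

Lemma smooth3_minus f g : smooth3 f -> smooth3 g -> smooth3 (fun x y e => f x y e - g x y e).
Proof. intros Hf Hg. apply smooth3_plus; auto using smooth3_opp. Qed.

Lemma Cn3_inv n f : (forall x y e, f x y e <> 0) -> Cn3 n f -> Cn3 n (fun x y e => / f x y e).
Proof.
intros Hnz. revert f Hnz. induction n as [|n IH]; intros f Hnz Hf; [now apply continuous3_inv|].
assert (Hi : Cn3 n (fun x y e => / f x y e)) by (apply IH, Cn3_pred; assumption).
destruct Hf as [Cf [Pf [F1 [F2 F3]]]].
apply (Cn3_succ n _ (fun x y e => -1 * D1 f x y e * (/ f x y e * / f x y e))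
  (fun x y e => -1 * D2 f x y e * (/ f x y e * / f x y e))
  (fun x y e => -1 * D3 f x y e * (/ f x y e * / f x y e))).
- now apply continuous3_inv.
- intros x y e. replace (-1 * _ * _) with (- D1 f x y e / f x y e ^ 2) by (field; apply Hnz).
  apply (is_derive_inv (fun t => f t y e)); [apply is_derive_D1, Pf | apply Hnz].
- intros x y e. replace (-1 * _ * _) with (- D2 f x y e / f x y e ^ 2) by (field; apply Hnz).
  apply (is_derive_inv (fun t => f x t e)); [apply is_derive_D2, Pf | apply Hnz].
- intros x y e. replace (-1 * _ * _) with (- D3 f x y e / f x y e ^ 2) by (field; apply Hnz).
  apply (is_derive_inv (fun t => f x y t)); [apply is_derive_D3, Pf | apply Hnz].
- apply Cn3_mult; [apply Cn3_mult; [apply smooth3_const | exact F1] | apply Cn3_mult; exact Hi].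
- apply Cn3_mult; [apply Cn3_mult; [apply smooth3_const | exact F2] | apply Cn3_mult; exact Hi].
- apply Cn3_mult; [apply Cn3_mult; [apply smooth3_const | exact F3] | apply Cn3_mult; exact Hi].
Qed.

Lemma smooth3_inv f : (forall x y e, f x y e <> 0) -> smooth3 f -> smooth3 (fun x y e => / f x y e).
Proof. intros Hnz Hf n. now apply Cn3_inv. Qed.

Definition smooth1 (g : R -> R) : Prop := smooth3 (fun x _ _ => g x).

Lemma smooth3_comp1 g u : smooth1 g -> smooth3 u -> smooth3 (fun x y e => g (u x y e)).
Proof. intros Hg Hu. exact (smooth3_comp _ u u u Hg Hu Hu Hu). Qed.

Ltac solve_smooth :=
  match goal with
  | |- smooth3 (fun _ _ _ => ?c) => apply smooth3_const
  | |- smooth3 (fun x _ _ => x) => apply smooth3_fst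
  | |- smooth3 (fun _ y _ => y) => apply smooth3_snd
  | |- smooth3 (fun _ _ e => e) => apply smooth3_thd
  | |- smooth3 (fun x y e => @?f x y e + @?g x y e) => apply (smooth3_plus f g); solve_smooth
  | |- smooth3 (fun x y e => @?f x y e - @?g x y e) => apply (smooth3_minus f g); solve_smooth
  | |- smooth3 (fun x y e => @?f x y e * @?g x y e) => apply (smooth3_mult f g); solve_smooth
  | |- smooth3 (fun x y e => @?f x y e / ?c) =>
      apply (smooth3_mult f (fun _ _ _ => / c)); [solve_smooth | apply smooth3_const]
  | |- smooth3 (fun x y e => - @?f x y e) => apply (smooth3_opp f); solve_smooth
  | |- smooth3 (fun x y e => ?G (@?u x y e) (@?v x y e) (@?w x y e)) =>
      apply (smooth3_comp G u v w); [assumption | solve_smooth ..]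
  | |- smooth3 (fun x y e => ?g (@?u x y e)) =>
      apply (smooth3_comp1 g u); [assumption | solve_smooth]
  | |- smooth3 _ => assumption
  end.

(** * Hadamard's lemma *)

Lemma continuous_RInt01_param {U : UniformSpace} (F : U -> R -> R) :
  (forall z t, continuous (fun p : U * R => F (fst p) (snd p)) (z, t)) ->
  forall z, continuous (fun z => RInt (F z) 0 1) z.
Proof.
intros HF z.
assert (HI : forall z', ex_RInt (F z') 0 1).
{ intros z'. apply (ex_RInt_continuous (V := R_CompleteNormedModule)). intros t _.
  apply (continuous_comp (fun t => (z', t)) (fun p => F (fst p) (snd p))); [|apply HF].
  apply (continuous_comp_2 (fun _ => z') (fun t => t) pair);
    auto using continuous_const, continuous_id.
  apply (continuous_ext (fun p : U * R => p)); [intros []; reflexivity | apply continuous_id]. }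
apply filterlim_locally. intros eps.
assert (Hd : forall t0, {d : posreal | forall z' t, ball z d z' -> Rabs (t - t0) < d ->
   Rabs (F z' t - F z t0) < eps / 4}).
{ intro t0. apply constructive_indefinite_description.
  destruct (proj1 (filterlim_locally _ _) (HF z t0) (pos_div_2 (pos_div_2 eps))) as [d Hd].
  exists d. intros z' t Hz Ht.
  replace (eps / 4) with (pos (pos_div_2 (pos_div_2 eps))) by (simpl; lra).
  apply (Hd (z', t)). split; [exact Hz | exact Ht]. }
(* Compactness of [[0, 1]] makes the continuity of [F] at [(z, t)] uniform in [t]. *)
destruct (compactness_value_1d 0 1 (fun t0 => pos_div_2 (proj1_sig (Hd t0)))) as [d Hcd].
exists d. intros z' Hz'.
change (Rabs (RInt (F z') 0 1 - RInt (F z) 0 1) < eps).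
assert (Hpt : forall t, 0 <= t <= 1 -> Rabs (F z' t - F z t) <= eps / 2).
{ intros t Ht. apply Rnot_lt_le. intros Hlt. apply (Hcd t Ht). intros [t0 [_ [Htt0 Hdt0]]].
  revert Htt0 Hdt0; destruct (Hd t0) as [D HD]; simpl; intros Htt0 Hdt0; pose proof (cond_pos D).
  assert (H1 := HD z' t (ball_le z d D ltac:(lra) z' Hz') ltac:(lra)).
  assert (H2 := HD z t (ball_center z D) ltac:(lra)).
  apply Rabs_def2 in H1, H2. apply Rlt_not_le in Hlt. apply Hlt, Rabs_le. lra. }
rewrite <- (RInt_minus (F z') (F z)) by apply HI.
eapply Rle_lt_trans; [apply abs_RInt_le_const; [lra | apply ex_RInt_minus; apply HI | exact Hpt] |].
destruct eps. simpl. lra.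
Qed.

(* The weight [t ^ k] makes the family closed under differentiation in [b]. *)
Definition moment (k : nat) (G : fun3) (a b c d : R) : R :=
  RInt (fun t => t ^ k * G (a + t * b) c d) 0 1.

Lemma ex_RInt_moment k (G : fun3) a b c d :
  continuous3 G -> ex_RInt (fun t => t ^ k * G (a + t * b) c d) 0 1.
Proof.
intros HG. apply (ex_RInt_continuous (V := R_CompleteNormedModule)). intros t _.
solve_continuous.
Qed.

Lemma continuous3_moment k (G u v w1 w2 : fun3) :
  continuous3 G -> continuous3 u -> continuous3 v -> continuous3 w1 -> continuous3 w2 ->
  continuous3 (fun x y e => moment k G (u x y e) (v x y e) (w1 x y e) (w2 x y e)).
Proof.
intros HG Hu Hv Hw1 Hw2 x y e.
apply (continuous_RInt01_param (fun z t =>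
  t ^ k * G (uncurry3 u z + t * uncurry3 v z) (uncurry3 w1 z) (uncurry3 w2 z))).
intros z t. solve_continuous.
Qed.

Lemma is_derive_moment k (G : fun3) (U V W1 W2 U' V' W1' W2' : R -> R) s0 :
  has_partials3 G -> continuous3 G ->
  continuous3 (D1 G) -> continuous3 (D2 G) -> continuous3 (D3 G) ->
  (forall s, is_derive U s (U' s)) -> (forall s, is_derive V s (V' s)) ->
  (forall s, is_derive W1 s (W1' s)) -> (forall s, is_derive W2 s (W2' s)) ->
  (forall s, continuous U' s) -> (forall s, continuous V' s) ->
  (forall s, continuous W1' s) -> (forall s, continuous W2' s) ->
  is_derive (fun s => moment k G (U s) (V s) (W1 s) (W2 s)) s0
    (U' s0 * moment k (D1 G) (U s0) (V s0) (W1 s0) (W2 s0)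
     + V' s0 * moment (S k) (D1 G) (U s0) (V s0) (W1 s0) (W2 s0)
     + W1' s0 * moment k (D2 G) (U s0) (V s0) (W1 s0) (W2 s0)
     + W2' s0 * moment k (D3 G) (U s0) (V s0) (W1 s0) (W2 s0)).
Proof.
intros HP C0 C1 C2 C3 HU HV HW1 HW2 KU KV KW1 KW2.
set (psi := fun s t => t ^ k * (D1 G (U s + t * V s) (W1 s) (W2 s) * (U' s + t * V' s)
  + D2 G (U s + t * V s) (W1 s) (W2 s) * W1' s + D3 G (U s + t * V s) (W1 s) (W2 s) * W2' s)).
assert (HD : forall s t, is_derive (fun s => t ^ k * G (U s + t * V s) (W1 s) (W2 s)) s (psi s t)).
{ intros s t. apply is_derive_scal, (is_derive_comp3 G (fun s => U s + t * V s)); auto.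
  apply (is_derive_plus U (fun s => t * V s)); [apply HU | apply is_derive_scal, HV]. }
assert (E : RInt (fun t => Derive (fun s => t ^ k * G (U s + t * V s) (W1 s) (W2 s)) s0) 0 1
  = U' s0 * moment k (D1 G) (U s0) (V s0) (W1 s0) (W2 s0)
     + V' s0 * moment (S k) (D1 G) (U s0) (V s0) (W1 s0) (W2 s0)
     + W1' s0 * moment k (D2 G) (U s0) (V s0) (W1 s0) (W2 s0)
     + W2' s0 * moment k (D3 G) (U s0) (V s0) (W1 s0) (W2 s0)).
{ apply is_RInt_unique.
  apply (is_RInt_ext (fun t =>
      U' s0 * (t ^ k * D1 G (U s0 + t * V s0) (W1 s0) (W2 s0))
    + V' s0 * (t ^ S k * D1 G (U s0 + t * V s0) (W1 s0) (W2 s0))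
    + W1' s0 * (t ^ k * D2 G (U s0 + t * V s0) (W1 s0) (W2 s0))
    + W2' s0 * (t ^ k * D3 G (U s0 + t * V s0) (W1 s0) (W2 s0)))).
  { intros t _. transitivity (psi s0 t); [unfold psi; simpl; ring |].
    symmetry. apply is_derive_unique, HD. }
  apply (is_RInt_plus (V := R_NormedModule));
    [apply (is_RInt_plus (V := R_NormedModule)); [apply (is_RInt_plus (V := R_NormedModule)) |] |].
  all: apply (is_RInt_scal (V := R_NormedModule)), (RInt_correct (V := R_CompleteNormedModule)).
  all: apply ex_RInt_moment; assumption. }
rewrite <- E. apply is_derive_RInt_param.
- apply filter_forall. intros s t _. exists (psi s t). apply HD.
- intros t _. apply (continuity_2d_pt_ext psi).
  { intros s t'. symmetry. apply is_derive_unique, HD. }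
  assert (CU : forall s, continuous U s) by (intro s; exact (is_derive_continuous _ _ _ (HU s))).
  assert (CV : forall s, continuous V s) by (intro s; exact (is_derive_continuous _ _ _ (HV s))).
  assert (CW1 : forall s, continuous W1 s) by (intro s; exact (is_derive_continuous _ _ _ (HW1 s))).
  assert (CW2 : forall s, continuous W2 s) by (intro s; exact (is_derive_continuous _ _ _ (HW2 s))).
  apply continuity_2d_pt_filterlim.
  change (continuous (fun z : R * R => psi (fst z) (snd z)) (s0, t)).
  unfold psi. solve_continuous.
- apply filter_forall. intros s. apply ex_RInt_moment, C0.
Qed.

Definition moment3 k (G u v w1 w2 : fun3) : fun3 :=
  fun x y e => moment k G (u x y e) (v x y e) (w1 x y e) (w2 x y e).

Lemma Cn3_moment3 n : forall k G u v w1 w2, smooth3 G ->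
  Cn3 n u -> Cn3 n v -> Cn3 n w1 -> Cn3 n w2 -> Cn3 n (moment3 k G u v w1 w2).
Proof.
induction n as [|n IH]; intros k G u v w1 w2 HG Hu Hv Hw1 Hw2.
{ apply continuous3_moment; auto using smooth3_continuous. }
set (M := fun j (D : fun3 -> fun3) => moment3 j (D G) u v w1 w2).
assert (HM : forall j D, smooth3 (D G) -> Cn3 n (M j D))
  by (intros j D HD; unfold M; apply IH; auto using Cn3_pred).
destruct Hu as [Cu [Pu [U1 [U2 U3]]]], Hv as [Cv [Pv [V1 [V2 V3]]]],
  Hw1 as [Cw1 [Pw1 [W11 [W12 W13]]]], Hw2 as [Cw2 [Pw2 [W21 [W22 W23]]]].
apply (Cn3_succ n (moment3 k G u v w1 w2)
  (fun x y e => D1 u x y e * M k D1 x y e + D1 v x y e * M (S k) D1 x y e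
     + D1 w1 x y e * M k D2 x y e + D1 w2 x y e * M k D3 x y e)
  (fun x y e => D2 u x y e * M k D1 x y e + D2 v x y e * M (S k) D1 x y e
     + D2 w1 x y e * M k D2 x y e + D2 w2 x y e * M k D3 x y e)
  (fun x y e => D3 u x y e * M k D1 x y e + D3 v x y e * M (S k) D1 x y e
     + D3 w1 x y e * M k D2 x y e + D3 w2 x y e * M k D3 x y e)).
- apply continuous3_moment; auto using smooth3_continuous.
- intros x y e.
  apply (is_derive_moment k G (fun s => u s y e) (fun s => v s y e) (fun s => w1 s y e)
    (fun s => w2 s y e) (fun s => D1 u s y e) (fun s => D1 v s y e) (fun s => D1 w1 s y e)
    (fun s => D1 w2 s y e));
    auto using smooth3_has_partials, smooth3_continuous, smooth3_D1, smooth3_D2, smooth3_D3;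
    intro s; solve [apply is_derive_D1; assumption
                   | apply continuous_line1, (Cn3_continuous n); assumption].
- intros x y e.
  apply (is_derive_moment k G (fun s => u x s e) (fun s => v x s e) (fun s => w1 x s e)
    (fun s => w2 x s e) (fun s => D2 u x s e) (fun s => D2 v x s e) (fun s => D2 w1 x s e)
    (fun s => D2 w2 x s e));
    auto using smooth3_has_partials, smooth3_continuous, smooth3_D1, smooth3_D2, smooth3_D3;
    intro s; solve [apply is_derive_D2; assumption
                   | apply continuous_line2, (Cn3_continuous n); assumption].
- intros x y e.
  apply (is_derive_moment k G (fun s => u x y s) (fun s => v x y s) (fun s => w1 x y s)
    (fun s => w2 x y s) (fun s => D3 u x y s) (fun s => D3 v x y s) (fun s => D3 w1 x y s)
    (fun s => D3 w2 x y s));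
    auto using smooth3_has_partials, smooth3_continuous, smooth3_D1, smooth3_D2, smooth3_D3;
    intro s; solve [apply is_derive_D3; assumption
                   | apply continuous_line3, (Cn3_continuous n); assumption].
- repeat apply Cn3_plus; apply Cn3_mult; auto using smooth3_D1, smooth3_D2, smooth3_D3.
- repeat apply Cn3_plus; apply Cn3_mult; auto using smooth3_D1, smooth3_D2, smooth3_D3.
- repeat apply Cn3_plus; apply Cn3_mult; auto using smooth3_D1, smooth3_D2, smooth3_D3.
Qed.

Lemma smooth3_moment3 k G u v w1 w2 : smooth3 G ->
  smooth3 u -> smooth3 v -> smooth3 w1 -> smooth3 w2 -> smooth3 (moment3 k G u v w1 w2).
Proof. intros HG Hu Hv Hw1 Hw2 n. now apply Cn3_moment3. Qed.

Lemma hadamard_moment (G : fun3) a b c d : has_partials3 G -> continuous3 (D1 G) ->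
  b * moment 0 (D1 G) a b c d = G (a + b) c d - G a c d.
Proof.
intros HP C1.
transitivity (RInt (fun t => b * (t ^ 0 * D1 G (a + t * b) c d)) 0 1).
{ symmetry. apply (is_RInt_unique (V := R_CompleteNormedModule)).
  apply (is_RInt_scal (V := R_NormedModule)), (RInt_correct (V := R_CompleteNormedModule)).
  apply ex_RInt_moment, C1. }
apply (is_RInt_unique (V := R_CompleteNormedModule)).
apply (is_RInt_ext (fun t => b * D1 G (a + t * b) c d)).
{ intros t _. simpl. ring. }
replace (G (a + b) c d - G a c d) with (G (a + 1 * b) c d - G (a + 0 * b) c d)
  by (f_equal; f_equal; ring).
apply (is_RInt_derive (fun t => G (a + t * b) c d)).
- intros t _. apply (is_derive_comp (fun z => G z c d) (fun t => a + t * b));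
    [apply is_derive_D1, HP | solve_derive].
- intros t _. solve_continuous.
Qed.

Lemma hadamard_quotient (h : fun3) (p : R -> R -> R) : smooth3 h -> smooth3 (fun _ y e => p y e) ->
  exists Df, smooth3 Df /\ (forall x y e, (x - p y e) * Df x y e = h x y e - h (p y e) y e) /\
    (forall y e, Df (p y e) y e = D1 h (p y e) y e).
Proof.
intros Sh Sp.
exists (moment3 0 (D1 h) (fun _ y e => p y e) (fun x y e => x - p y e)
  (fun _ y _ => y) (fun _ _ e => e)).
split; [apply smooth3_moment3; [apply smooth3_D1, Sh | solve_smooth ..] |]. split.
- intros x y e. unfold moment3. rewrite hadamard_moment;
    [ | apply smooth3_has_partials, Sh | apply smooth3_continuous, smooth3_D1, Sh].
  replace (p y e + (x - p y e)) with x by ring. reflexivity.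
- intros y e. unfold moment3, moment. rewrite Rminus_eq_0.
  rewrite (RInt_ext _ (fun _ => D1 h (p y e) y e))
    by (intros t _; simpl; rewrite Rmult_0_r, Rplus_0_r; ring).
  rewrite RInt_const. unfold scal; simpl; unfold mult; simpl. ring.
Qed.

(** * Flat functions and cutoffs *)

Lemma smooth1_of_derivatives (F : nat -> R -> R) :
  (forall k s, is_derive (F k) s (F (S k) s)) -> forall k, smooth1 (F k).
Proof.
intros HF k n. revert k. induction n as [|n IH]; intro k.
{ intros x y e. apply (continuous_comp (fun p : R * R * R => fst (fst p)) (F k));
    [apply continuous3_fst | apply (is_derive_continuous _ _ _ (HF k _))]. }
apply (Cn3_succ n _ (fun x _ _ => F (S k) x) (fun _ _ _ => 0) (fun _ _ _ => 0));
  [apply (Cn3_continuous n), IH | intros; apply HF | solve_derive | solve_derive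
  | apply IH | apply smooth3_const | apply smooth3_const].
Qed.

Fixpoint poly_eval (P : list R) (u : R) : R :=
  match P with nil => 0 | c :: Q => c + u * poly_eval Q u end.

Fixpoint poly_add (P Q : list R) : list R :=
  match P, Q with
  | nil, _ => Q
  | _, nil => P
  | a :: P', b :: Q' => (a + b) :: poly_add P' Q'
  end.

Fixpoint poly_deriv (P : list R) : list R :=
  match P with nil => nil | _ :: Q => poly_add Q (0 :: poly_deriv Q) end.

Lemma poly_eval_add P Q u : poly_eval (poly_add P Q) u = poly_eval P u + poly_eval Q u.
Proof. revert Q; induction P as [|a P IH]; intros [|b Q]; simpl; try rewrite IH; ring. Qed.

Lemma poly_eval_opp P u : poly_eval (map Ropp P) u = - poly_eval P u.
Proof. induction P as [|a P IH]; simpl; try rewrite IH; ring. Qed.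

Lemma is_derive_poly_eval P u : is_derive (poly_eval P) u (poly_eval (poly_deriv P) u).
Proof.
induction P as [|c Q IH]; simpl; [solve_derive|].
rewrite poly_eval_add. simpl.
replace (poly_eval Q u + (0 + u * poly_eval (poly_deriv Q) u))
  with (0 + (1 * poly_eval Q u + u * poly_eval (poly_deriv Q) u)) by ring.
apply (is_derive_plus (fun _ => c)); [solve_derive |].
apply (is_derive_mult (fun t => t) (poly_eval Q));
  [solve_derive | exact IH | intros; apply Rmult_comm].
Qed.

Lemma poly_eval_bound P : exists B N, forall u, 1 <= u -> Rabs (poly_eval P u) <= B * u ^ N.
Proof.
induction P as [|c Q [B [N IH]]].
- exists 0, O. intros u _. simpl. rewrite Rabs_R0. lra.
- exists (Rabs c + Rabs B), (S N). intros u Hu. simpl.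
  assert (Hp : 1 <= u ^ N) by (apply pow_R1_Rle; lra).
  specialize (IH u Hu). pose proof (Rabs_pos c). pose proof (Rle_abs B).
  eapply Rle_trans; [apply Rabs_triang |]. rewrite Rabs_mult, (Rabs_pos_eq u) by lra.
  assert (H1 : 1 <= u * u ^ N) by nra.
  assert (H2 : u * Rabs (poly_eval Q u) <= Rabs B * (u * u ^ N)) by nra.
  change (u ^ S N) with (u * u ^ N). nra.
Qed.

Lemma exp_pow x n : exp x ^ n = exp (INR n * x).
Proof.
induction n as [|n IH]; simpl pow; [rewrite Rmult_0_l, exp_0; reflexivity |].
rewrite IH, S_INR, <- exp_plus. f_equal. ring.
Qed.

Lemma exp_ge_pow N u : 0 < u -> (u / (INR N + 1)) ^ S N <= exp u.
Proof.
intros Hu. assert (HN : 0 < INR N + 1) by (pose proof (pos_INR N); lra).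
replace u with (INR (S N) * (u / (INR N + 1))) at 2 by (rewrite S_INR; field; lra).
rewrite <- exp_pow. apply pow_incr. split; [apply Rlt_le, Rdiv_lt_0_compat; lra |].
pose proof (exp_ineq1_le (u / (INR N + 1))). lra.
Qed.

Lemma poly_exp_vanish P eps : 0 < eps ->
  exists M, 0 < M /\ forall u, M < u -> Rabs (poly_eval P u * exp (- u)) < eps.
Proof.
intros He. destruct (poly_eval_bound P) as [B [N HB]].
assert (HN : 0 < INR N + 1) by (pose proof (pos_INR N); lra).
set (C := Rabs B * (INR N + 1) ^ S N).
assert (HC : 0 <= C) by (apply Rmult_le_pos; [apply Rabs_pos | apply pow_le; lra]).
exists (Rmax 1 (C / eps)). split; [apply (Rlt_le_trans _ 1); [lra | apply Rmax_l] |].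
intros u Hu. pose proof (Rmax_l 1 (C / eps)). pose proof (Rmax_r 1 (C / eps)).
assert (Hexp : 0 < (u / (INR N + 1)) ^ S N) by (apply pow_lt, Rdiv_lt_0_compat; lra).
rewrite Rabs_mult, exp_Ropp, (Rabs_pos_eq (/ exp u)) by (apply Rlt_le, Rinv_0_lt_compat, exp_pos).
apply (Rle_lt_trans _ (Rabs B * u ^ N * / (u / (INR N + 1)) ^ S N)).
- apply Rmult_le_compat; try apply Rabs_pos.
  + apply Rlt_le, Rinv_0_lt_compat, exp_pos.
  + apply (Rle_trans _ _ _ (HB u ltac:(lra))), Rmult_le_compat_r, Rle_abs. apply pow_le; lra.
  + apply Rinv_le_contravar; [exact Hexp | apply exp_ge_pow; lra].
- replace (Rabs B * u ^ N * / (u / (INR N + 1)) ^ S N) with (C / u)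
    by (unfold C, Rdiv; rewrite Rpow_mult_distr, pow_inv; change (u ^ S N) with (u * u ^ N);
        field; repeat split; try apply pow_nonzero; lra).
  apply (Rmult_lt_reg_r u); [lra |]. unfold Rdiv. rewrite Rmult_assoc, Rinv_l, Rmult_1_r by lra.
  apply (Rmult_lt_reg_r (/ eps)); [apply Rinv_0_lt_compat; lra |].
  replace (eps * u * / eps) with u by (field; lra). exact (Rle_lt_trans _ _ _ H0 Hu).
Qed.

(* [flat n] is the [n]-th derivative of [s |-> exp (-1/s)] (extended by 0 for [s <= 0]),
   written as [P_n (1/s) exp (-1/s)] with [P_(n+1) u = u^2 (P_n u - P_n' u)]. *)
Fixpoint flat_poly (n : nat) : list R :=
  match n with
  | O => 1 :: nil
  | S m => 0 :: 0 :: poly_add (flat_poly m) (map Ropp (poly_deriv (flat_poly m)))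
  end.

Definition flat (n : nat) (s : R) : R :=
  if Rlt_dec 0 s then poly_eval (flat_poly n) (/ s) * exp (- / s) else 0.

Lemma flat_pos n s : 0 < s -> flat n s = poly_eval (flat_poly n) (/ s) * exp (- / s).
Proof. intros Hs. unfold flat. destruct (Rlt_dec 0 s); [reflexivity | lra]. Qed.

Lemma flat_nonpos n s : s <= 0 -> flat n s = 0.
Proof. intros Hs. unfold flat. destruct (Rlt_dec 0 s); [lra | reflexivity]. Qed.

Lemma is_derive_flat_pos n s : 0 < s -> is_derive (flat n) s (flat (S n) s).
Proof.
intros Hs. rewrite flat_pos by exact Hs.
apply (is_derive_ext_loc (fun t => poly_eval (flat_poly n) (/ t) * exp (- / t))).
{ exists (mkposreal s Hs). intros t Ht. change (Rabs (t - s) < s) in Ht. apply Rabs_def2 in Ht.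
  rewrite flat_pos by lra. reflexivity. }
simpl flat_poly. set (P := flat_poly n). simpl poly_eval.
rewrite poly_eval_add, poly_eval_opp.
auto_derive.
- repeat split; try lra. exists (poly_eval (poly_deriv P) (/ s)). apply is_derive_poly_eval.
- replace (Derive (fun x => poly_eval P x) (/ s)) with (poly_eval (poly_deriv P) (/ s))
    by (symmetry; apply is_derive_unique, is_derive_poly_eval).
  field. lra.
Qed.

Lemma is_derive_flat_0 n : is_derive (flat n) 0 (flat (S n) 0).
Proof.
rewrite flat_nonpos by lra. apply is_derive_Reals. intros eps He.
destruct (poly_exp_vanish (0 :: flat_poly n) eps He) as [M [HM HL]].
exists (mkposreal (/ M) (Rinv_0_lt_compat _ HM)). intros h Hh0 Hh. simpl in Hh.
rewrite Rplus_0_l, (flat_nonpos n 0) by lra.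
destruct (Rlt_dec 0 h) as [Hp | Hn].
- rewrite flat_pos by exact Hp.
  replace ((_ - 0) / h - 0) with (poly_eval (0 :: flat_poly n) (/ h) * exp (- / h))
    by (simpl; field; lra).
  apply HL. rewrite Rabs_pos_eq in Hh by lra.
  rewrite <- (Rinv_inv M). apply Rinv_lt_contravar; [apply Rmult_lt_0_compat |]; lra.
- rewrite flat_nonpos by lra. replace ((0 - 0) / h - 0) with 0 by (field; exact Hh0).
  rewrite Rabs_R0. exact He.
Qed.

Lemma is_derive_flat n s : is_derive (flat n) s (flat (S n) s).
Proof.
destruct (Rtotal_order s 0) as [Hs | [-> | Hs]];
  [| apply is_derive_flat_0 | now apply is_derive_flat_pos].
rewrite flat_nonpos by lra.
apply (is_derive_ext_loc (fun _ => 0)); [| solve_derive].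
exists (mkposreal (- s) ltac:(lra)). intros t Ht. change (Rabs (t - s) < - s) in Ht.
apply Rabs_def2 in Ht. rewrite flat_nonpos by lra. reflexivity.
Qed.

Lemma smooth1_flat : smooth1 (flat 0).
Proof. apply (smooth1_of_derivatives flat is_derive_flat). Qed.

Lemma flat_nonneg s : 0 <= flat 0 s.
Proof.
unfold flat. destruct (Rlt_dec 0 s); [| lra]. simpl. rewrite Rmult_0_r, Rplus_0_r, Rmult_1_l.
apply Rlt_le, exp_pos.
Qed.

Lemma flat_pos_lt s : 0 < s -> 0 < flat 0 s.
Proof.
intros Hs. rewrite flat_pos by exact Hs. simpl. rewrite Rmult_0_r, Rplus_0_r, Rmult_1_l.
apply exp_pos.
Qed.

Definition smooth_step (x : R) : R := flat 0 x / (flat 0 x + flat 0 (1 - x)).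

Lemma smooth_step_den x : 0 < flat 0 x + flat 0 (1 - x).
Proof.
pose proof (flat_nonneg x). pose proof (flat_nonneg (1 - x)).
destruct (Rlt_dec 0 x) as [Hx | Hx];
  [pose proof (flat_pos_lt x Hx) | pose proof (flat_pos_lt (1 - x) ltac:(lra))]; lra.
Qed.

Lemma smooth1_smooth_step : smooth1 smooth_step.
Proof.
assert (Hf := smooth1_flat). unfold smooth1, smooth_step, Rdiv.
apply smooth3_mult; [solve_smooth |].
apply (smooth3_inv (fun x _ _ => flat 0 x + flat 0 (1 - x))); [| solve_smooth].
intros x _ _. pose proof (smooth_step_den x). lra.
Qed.

Lemma smooth_step_0 x : x <= 0 -> smooth_step x = 0.
Proof. intros Hx. unfold smooth_step. rewrite (flat_nonpos 0 x) by exact Hx. unfold Rdiv. ring. Qed.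

Lemma smooth_step_1 x : 1 <= x -> smooth_step x = 1.
Proof.
intros Hx. unfold smooth_step. rewrite (flat_nonpos 0 (1 - x)) by lra. rewrite Rplus_0_r.
apply Rdiv_diag. pose proof (flat_pos_lt x ltac:(lra)). lra.
Qed.

Lemma smooth_step_range x : 0 <= smooth_step x <= 1.
Proof.
unfold smooth_step. pose proof (smooth_step_den x). pose proof (flat_nonneg (1 - x)).
split; [apply Rmult_le_pos; [apply flat_nonneg | apply Rlt_le, Rinv_0_lt_compat; lra] |].
apply (Rmult_le_reg_r (flat 0 x + flat 0 (1 - x))); [lra |].
unfold Rdiv. rewrite Rmult_assoc, Rinv_l, Rmult_1_r, Rmult_1_l; lra.
Qed.

Lemma smooth_cutoff_id rho : 0 < rho -> exists sg : R -> R, smooth1 sg /\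
  (forall t, Rabs t <= rho -> sg t = t) /\ (forall t, Rabs (sg t) <= 2 * rho).
Proof.
intros Hr. assert (Hs := smooth1_smooth_step).
exists (fun t => t * (smooth_step (t / rho + 2) * smooth_step (2 - t / rho))).
split; [unfold smooth1; solve_smooth | split].
- intros t Ht. apply Rabs_le_between in Ht. destruct Ht as [Ht1 Ht2].
  assert (Hu : t = t / rho * rho) by (field; lra). set (u := t / rho) in *.
  rewrite !smooth_step_1; [ring | nra | nra].
- intros t. assert (Hu : t = t / rho * rho) by (field; lra). set (u := t / rho) in *.
  pose proof (smooth_step_range (u + 2)). pose proof (smooth_step_range (2 - u)).
  destruct (Rle_lt_dec (Rabs t) (2 * rho)) as [Ht | Ht].
  + assert (Hq : 0 <= smooth_step (u + 2) * smooth_step (2 - u) <= 1) by (split; nra).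
    rewrite Rabs_mult, (Rabs_pos_eq (_ * _)) by lra. pose proof (Rabs_pos t). nra.
  + destruct (Rle_lt_dec 0 t).
    * rewrite Rabs_pos_eq in Ht by lra. rewrite (smooth_step_0 (2 - u)) by nra.
      rewrite !Rmult_0_r, Rabs_R0. lra.
    * rewrite Rabs_left in Ht by lra. rewrite (smooth_step_0 (u + 2)) by nra.
      rewrite Rmult_0_l, Rmult_0_r, Rabs_R0. lra.
Qed.

Lemma smooth_reciprocal c : 0 < c ->
  exists Rs : R -> R, smooth1 Rs /\ forall z, z <= - c -> Rs z = / z.
Proof.
intros Hc. assert (Hs := smooth1_smooth_step).
(* [S] is [1] on [z <= - c] and [0] on [z >= - c / 2], so the denominator below is a convex
   combination of [z] and [- c / 2] which equals [z] on [z <= - c] and never exceeds [- c / 2]. *)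
set (S z := smooth_step (- (2 * z / c) - 1)).
assert (Hden : forall z, z * S z - c / 2 * (1 - S z) <= - (c / 2)).
{ intros z. unfold S. destruct (Rle_lt_dec z (- (c / 2))) as [Hz | Hz].
  - destruct (smooth_step_range (- (2 * z / c) - 1)). nra.
  - rewrite smooth_step_0; [lra |].
    assert (Hz' : z = z / c * c) by (field; lra). unfold Rdiv in *. nra. }
exists (fun z => / (z * S z - c / 2 * (1 - S z))). split.
- apply (smooth3_inv (fun z _ _ => z * S z - c / 2 * (1 - S z))).
  + intros z _ _. specialize (Hden z). lra.
  + unfold S. solve_smooth.
- intros z Hz. unfold S. rewrite smooth_step_1; [f_equal; ring |].
  assert (Hz' : z = z / c * c) by (field; lra). unfold Rdiv in *. nra.
Qed.

(** * The implicit function theorem *)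

Lemma mean_value (g : R -> R) a b : (forall t, ex_derive g t) ->
  exists xi, Rmin a b <= xi <= Rmax a b /\ g b - g a = Derive g xi * (b - a).
Proof.
intros Hg. apply MVT_gen.
- intros x _. apply Derive_correct, Hg.
- intros x _. apply continuity_pt_filterlim, (ex_derive_continuous g), Hg.
Qed.

Lemma Rabs_between a b x : Rmin a b <= x <= Rmax a b -> Rabs (x - a) <= Rabs (b - a).
Proof.
unfold Rmin, Rmax. destruct (Rle_dec a b); intros; unfold Rabs; repeat destruct Rcase_abs; lra.
Qed.

Section ImplicitFunction.

Variables (H : fun3) (r c : R).
Hypothesis HP : has_partials3 H.
Hypothesis HC : continuous3 H.
Hypothesis Hr : 0 < r.
Hypothesis Hc : 0 < c.
Hypothesis HD1 : forall x y e, -r <= x <= r -> D1 H x y e <= -c.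
Hypothesis Hsign : forall y e, 0 < H (-r) y e /\ H r y e < 0.
Hypothesis HC1 : continuous3 (D1 H).
Hypothesis HC2 : continuous3 (D2 H).

Lemma implicit_decreasing y e x1 x2 : -r <= x1 -> x1 < x2 -> x2 <= r -> H x2 y e < H x1 y e.
Proof.
intros H1 H2 H3.
destruct (mean_value (fun t => H t y e) x1 x2) as [xi [Hxi E]];
  [intro; eexists; apply is_derive_D1, HP |].
change (Derive (fun t => H t y e) xi) with (D1 H xi y e) in E.
rewrite Rmin_left, Rmax_right in Hxi by lra.
pose proof (HD1 xi y e ltac:(lra)). nra.
Qed.

Lemma implicit_unique y e x1 x2 : -r <= x1 <= r -> -r <= x2 <= r -> H x1 y e = H x2 y e -> x1 = x2.
Proof.
intros H1 H2 E. destruct (Rtotal_order x1 x2) as [L | [L | L]]; [| exact L |].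
- pose proof (implicit_decreasing y e x1 x2 ltac:(lra) L ltac:(lra)). lra.
- pose proof (implicit_decreasing y e x2 x1 ltac:(lra) L ltac:(lra)). lra.
Qed.

Lemma implicit_zero_sig y e : {x | -r <= x <= r /\ H x y e = 0}.
Proof.
destruct (Hsign y e) as [Hleft Hright].
destruct (IVT (fun x => - H x y e) (-r) r) as [x [Hx E]]; [| lra | lra | lra |].
- intro x. apply continuity_pt_opp, continuity_pt_filterlim, continuous_line1, HC.
- exists x. split; [exact Hx | lra].
Qed.

Definition implicit_zero y e : R := proj1_sig (implicit_zero_sig y e).

Lemma implicit_zero_spec y e : -r < implicit_zero y e < r /\ H (implicit_zero y e) y e = 0.
Proof.
unfold implicit_zero. destruct (implicit_zero_sig y e) as [x [Hx E]]. simpl.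
destruct (Hsign y e). split; [| exact E].
split; apply Rnot_le_lt; intro; [replace x with (-r) in E | replace x with r in E]; lra.
Qed.

Lemma implicit_zero_between y e a b : -r <= a -> a < b -> b <= r -> 0 < H a y e -> H b y e < 0 ->
  a < implicit_zero y e < b.
Proof.
intros Ha Hab Hb Pa Nb. destruct (implicit_zero_spec y e) as [Hp E].
set (p := implicit_zero y e) in *.
split; apply Rnot_le_lt; intros Hle; destruct (Rle_lt_or_eq_dec _ _ Hle) as [Hlt | Heq].
- pose proof (implicit_decreasing y e p a ltac:(lra) Hlt ltac:(lra)). lra.
- rewrite Heq in E. lra.
- pose proof (implicit_decreasing y e b p ltac:(lra) Hlt ltac:(lra)). lra.
- rewrite <- Heq in E. lra.
Qed.

Lemma continuous3_implicit_zero : continuous3 (fun _ y e => implicit_zero y e).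
Proof.
apply continuous3_ball. intros x y e eps Heps.
set (q0 := implicit_zero y e). destruct (implicit_zero_spec y e) as [Hq0 E0]. fold q0 in Hq0, E0.
set (eta := Rmin (eps / 2) (Rmin (r + q0) (r - q0))).
assert (Heta : 0 < eta) by (repeat apply Rmin_pos; lra).
assert (Heta1 : eta <= eps / 2) by apply Rmin_l.
assert (Heta2 : eta <= Rmin (r + q0) (r - q0)) by apply Rmin_r.
pose proof (Rmin_l (r + q0) (r - q0)). pose proof (Rmin_r (r + q0) (r - q0)).
assert (Pl : 0 < H (q0 - eta) y e) by (rewrite <- E0; apply implicit_decreasing; lra).
assert (Nr : H (q0 + eta) y e < 0) by (rewrite <- E0; apply implicit_decreasing; lra).
destruct (proj1 (continuous3_ball H) HC (q0 - eta) y e _ Pl) as [d1 [Hd1 K1]].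
destruct (proj1 (continuous3_ball H) HC (q0 + eta) y e (- H (q0 + eta) y e)) as [d2 [Hd2 K2]];
  [lra |].
exists (Rmin d1 d2). split; [now apply Rmin_pos |].
intros _ y' e' _ Hy He'. pose proof (Rmin_l d1 d2). pose proof (Rmin_r d1 d2).
assert (A1 := K1 (q0 - eta) y' e' ltac:(rewrite Rminus_eq_0, Rabs_R0; lra) ltac:(lra) ltac:(lra)).
assert (A2 := K2 (q0 + eta) y' e' ltac:(rewrite Rminus_eq_0, Rabs_R0; lra) ltac:(lra) ltac:(lra)).
apply Rabs_def2 in A1, A2.
destruct (implicit_zero_between y' e' (q0 - eta) (q0 + eta)); try lra.
apply Rabs_def1; lra.
Qed.

Lemma is_derive_implicit (q : R -> R -> R) :
  (forall y e, -r < q y e < r /\ H (q y e) y e = 0) -> continuous3 (fun _ y e => q y e) ->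
  forall y e, is_derive (fun s => q s e) y (- D2 H (q y e) y e / D1 H (q y e) y e).
Proof.
intros Hq Cq y e. set (q0 := q y e).
(* By the mean value theorem in both variables, the difference quotient of [q] at [y] is
   [- D2 H / D1 H] evaluated at intermediate points, which tend to [(q0, y)]. *)
destruct (Hq y e) as [R0 E0]. fold q0 in R0, E0.
assert (CPhi : continuous (fun z : R * R * R =>
  - D2 H q0 (snd (fst z)) e / D1 H (fst (fst z)) (snd z) e) (q0, y, y)).
{ solve_continuous. cbn [fst snd]. pose proof (HD1 q0 y e ltac:(lra)). lra. }
apply is_derive_Reals. intros eps He.
destruct (proj1 (filterlim_locally _ _) CPhi (mkposreal eps He)) as [dP KP].
destruct (proj1 (continuous3_ball _) Cq 0 y e dP (cond_pos dP)) as [dq [Hdq Kq]].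
exists (mkposreal (Rmin dP dq) (Rmin_pos _ _ (cond_pos dP) Hdq)). intros k Hk0 Hk. simpl in Hk.
pose proof (Rmin_l dP dq). pose proof (Rmin_r dP dq).
set (q1 := q (y + k) e). destruct (Hq (y + k) e) as [R1 E1]. fold q1 in R1, E1.
assert (Hq1 : Rabs (q1 - q0) < dP).
{ apply (Kq 0 (y + k) e); rewrite ?Rminus_eq_0, ?Rabs_R0; try lra.
  replace (y + k - y) with k by ring. lra. }
destruct (mean_value (fun t => H t (y + k) e) q0 q1) as [xi [Hxi Exi]];
  [intro; eexists; apply is_derive_D1, HP |].
destruct (mean_value (fun t => H q0 t e) y (y + k)) as [ze [Hze Eze]];
  [intro; eexists; apply is_derive_D2, HP |].
change (Derive (fun t => H t (y + k) e) xi) with (D1 H xi (y + k) e) in Exi.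
change (Derive (fun t => H q0 t e) ze) with (D2 H q0 ze e) in Eze.
assert (Hxi_r : -r <= xi <= r) by (revert Hxi; unfold Rmin, Rmax; destruct Rle_dec; lra).
assert (HD := HD1 xi (y + k) e Hxi_r).
assert (Z : D1 H xi (y + k) e * (q1 - q0) = - (D2 H q0 ze e * k)).
{ replace (y + k - y) with k in Eze by ring. lra. }
fold q0. replace ((q1 - q0) / k) with (- D2 H q0 ze e / D1 H xi (y + k) e).
2: { replace (q1 - q0) with (- (D2 H q0 ze e * k) / D1 H xi (y + k) e)
       by (rewrite <- Z; field; lra).
     field. split; lra. }
apply (KP (xi, ze, y + k)). split; [split |].
- change (Rabs (xi - q0) < dP). eapply Rle_lt_trans; [apply Rabs_between, Hxi | exact Hq1].
- change (Rabs (ze - y) < dP). eapply Rle_lt_trans; [apply Rabs_between, Hze |].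
  replace (y + k - y) with k by ring. lra.
- change (Rabs (y + k - y) < dP). replace (y + k - y) with k by ring. lra.
Qed.

End ImplicitFunction.

Lemma smooth3_of_implicit_derivatives (H : fun3) (p : R -> R -> R) :
  smooth3 H -> (forall y e, D1 H (p y e) y e <> 0) -> continuous3 (fun _ y e => p y e) ->
  (forall y e, is_derive (fun s => p s e) y (- D2 H (p y e) y e / D1 H (p y e) y e)) ->
  (forall y e, is_derive (fun s => p y s) e (- D3 H (p y e) y e / D1 H (p y e) y e)) ->
  smooth3 (fun _ y e => p y e).
Proof.
intros SH Hnz Cp Dy De n. induction n as [|n IH]; [exact Cp |].
assert (Hquot : forall D, smooth3 (D H) ->
  Cn3 n (fun _ y e => - D H (p y e) y e / D1 H (p y e) y e)).
{ intros D HD.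
  apply (Cn3_mult n (fun _ y e => - D H (p y e) y e) (fun _ y e => / D1 H (p y e) y e)).
  - apply Cn3_opp, (Cn3_comp n (D H));
      [exact HD | exact IH | apply smooth3_snd | apply smooth3_thd].
  - apply Cn3_inv; [intros _ y e; apply Hnz |].
    apply (Cn3_comp n (D1 H));
      [apply smooth3_D1, SH | exact IH | apply smooth3_snd | apply smooth3_thd]. }
apply (Cn3_succ n _ (fun _ _ _ => 0) (fun _ y e => - D2 H (p y e) y e / D1 H (p y e) y e)
  (fun _ y e => - D3 H (p y e) y e / D1 H (p y e) y e));
  [exact Cp | solve_derive | intros; apply Dy | intros; apply De | apply smooth3_const
  | apply Hquot, smooth3_D2, SH | apply Hquot, smooth3_D3, SH].
Qed.

Theorem smooth_implicit_zero (H : fun3) r c :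
  smooth3 H -> 0 < r -> 0 < c ->
  (forall x y e, -r <= x <= r -> D1 H x y e <= -c) ->
  (forall y e, 0 < H (-r) y e /\ H r y e < 0) ->
  exists p : R -> R -> R, smooth3 (fun _ y e => p y e) /\
    forall y e, -r < p y e < r /\ H (p y e) y e = 0.
Proof.
intros SH Hr Hc HD1 Hsign.
assert (HP := smooth3_has_partials H SH). assert (HC := smooth3_continuous H SH).
assert (HC1 := smooth3_continuous _ (smooth3_D1 H SH)).
assert (HC2 := smooth3_continuous _ (smooth3_D2 H SH)).
assert (HC3 := smooth3_continuous _ (smooth3_D3 H SH)).
set (p := implicit_zero H r HC Hr Hsign).
assert (Hp : forall y e, -r < p y e < r /\ H (p y e) y e = 0) by (intros; apply implicit_zero_spec).
assert (Cp := continuous3_implicit_zero H r c HP HC Hr Hc HD1 Hsign).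
exists p. split; [| exact Hp].
apply (smooth3_of_implicit_derivatives H p SH); [| exact Cp | |].
- intros y e. pose proof (HD1 (p y e) y e ltac:(specialize (Hp y e); lra)). lra.
- exact (is_derive_implicit H r c HP Hc HD1 HC1 HC2 p Hp Cp).
- intros y e.
  (* the [e]-derivative is the [y]-derivative for [H] with its last two arguments swapped *)
  apply (is_derive_implicit (fun x a b => H x b a) r c) with (q := fun a b => p b a).
  + intros x a b. destruct (HP x b a) as [? [? ?]]. repeat split; assumption.
  + exact Hc.
  + intros x a b Hx. apply HD1, Hx.
  + exact (continuous3_comp _ _ _ _ HC1 continuous3_fst continuous3_thd continuous3_snd).
  + exact (continuous3_comp _ _ _ _ HC3 continuous3_fst continuous3_thd continuous3_snd).
  + intros a b. apply Hp.
  + exact (continuous3_comp _ _ _ _ Cp continuous3_fst continuous3_thd continuous3_snd).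
Qed.

(** * The normal form *)

Lemma zero_of_sign_change (g : R -> R) a b : a < 0 -> 0 < b -> continuous g 0 ->
  (forall x, a <= x <= b -> x <> 0 -> x * g x < 0) -> g 0 = 0.
Proof.
intros Ha Hb Hg Hsign. destruct (Req_dec (g 0) 0) as [E | Hne]; [exact E | exfalso].
destruct (proj1 (filterlim_locally _ _) Hg (mkposreal _ (Rabs_pos_lt _ Hne))) as [d Hd].
assert (Hsame : forall x, Rabs x < d -> 0 < g x * g 0).
{ intros x Hx. assert (Hx' : Rabs (g x - g 0) < Rabs (g 0)).
  { apply (Hd x). change (Rabs (x - 0) < d). rewrite Rminus_0_r. exact Hx. }
  apply Rabs_def2 in Hx'. unfold Rabs in Hx'. destruct (Rcase_abs (g 0)); nra. }
set (m := Rmin (d / 2) (Rmin b (- a))).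
assert (Hm : 0 < m) by (apply Rmin_pos; [destruct d; simpl; lra | apply Rmin_pos; lra]).
assert (Hmd : m < d) by (apply (Rle_lt_trans _ (d / 2)); [apply Rmin_l | destruct d; simpl; lra]).
assert (Hmb : m <= b /\ m <= - a).
{ pose proof (Rmin_r (d / 2) (Rmin b (- a))).
  pose proof (Rmin_l b (- a)). pose proof (Rmin_r b (- a)). unfold m. lra. }
destruct (Rlt_dec 0 (g 0)).
- pose proof (Hsame m ltac:(rewrite Rabs_pos_eq; lra)).
  pose proof (Hsign m ltac:(lra) ltac:(lra)). nra.
- pose proof (Hsame (- m) ltac:(rewrite Rabs_Ropp, Rabs_pos_eq; lra)).
  pose proof (Hsign (- m) ltac:(lra) ltac:(lra)). nra.
Qed.

Lemma negative_near_segment (F : fun3) a b : a <= b -> continuous3 F ->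
  (forall x, a <= x <= b -> F x 0 0 < 0) ->
  exists c d, 0 < c /\ 0 < d /\
    forall x y e, a - d <= x <= b + d -> Rabs y < d -> Rabs e < d -> F x y e <= - c.
Proof.
intros Hab HF Hneg.
destruct (continuity_ab_maj (fun x => F x 0 0) a b Hab) as [xm [Hmax Hxm]].
{ intros x _. apply continuity_pt_filterlim, continuous_line1, HF. }
set (c := - F xm 0 0 / 2). assert (Hc : 0 < c) by (unfold c; pose proof (Hneg xm Hxm); lra).
assert (Hd : forall t0, {d : posreal | forall x y e,
  Rabs (x - t0) < d -> Rabs y < d -> Rabs e < d -> Rabs (F x y e - F t0 0 0) < c}).
{ intro t0. apply constructive_indefinite_description.
  destruct (proj1 (continuous3_ball F) HF t0 0 0 c Hc) as [d [Hd K]].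
  exists (mkposreal d Hd). intros x y e H1 H2 H3. apply K; rewrite ?Rminus_0_r; assumption. }
destruct (compactness_value_1d a b (fun t0 => pos_div_2 (proj1_sig (Hd t0)))) as [d0 Hd0].
pose proof (cond_pos d0).
exists c, (d0 / 2). split; [exact Hc |]. split; [lra |].
intros x y e Hx Hy He.
set (xt := Rmax a (Rmin x b)).
assert (Hxt : a <= xt <= b) by (unfold xt, Rmax, Rmin; repeat destruct Rle_dec; lra).
assert (Hxx : Rabs (x - xt) <= d0 / 2)
  by (apply Rabs_le; unfold xt, Rmax, Rmin; repeat destruct Rle_dec; lra).
apply Rnot_lt_le. intros Hlt. apply (Hd0 xt Hxt). intros [t [Ht [Htt Hdt]]].
revert Htt Hdt. destruct (Hd t) as [D HD]. simpl. intros Htt Hdt.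
assert (A : Rabs (F x y e - F t 0 0) < c).
{ apply HD; [| lra | lra].
  replace (x - t) with ((x - xt) + (xt - t)) by ring.
  eapply Rle_lt_trans; [apply Rabs_triang | lra]. }
apply Rabs_def2 in A. pose proof (Hmax t Ht). unfold c in *. lra.
Qed.

Lemma local_sign_box (h : fun3) : has_partials3 h -> continuous3 h -> continuous3 (D1 h) ->
  h 0 0 0 = 0 -> D1 h 0 0 0 < 0 ->
  exists r c d, 0 < r /\ 0 < c /\ 0 < d /\
    (forall x y e, -r <= x <= r -> Rabs y < d -> Rabs e < d -> D1 h x y e <= -c) /\
    (forall y e, Rabs y < d -> Rabs e < d -> 0 < h (-r) y e /\ h r y e < 0).
Proof.
intros HP HC HC1 h00 Hh1.
set (c := - D1 h 0 0 0 / 2). assert (Hc : 0 < c) by (unfold c; lra).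
destruct (proj1 (continuous3_ball _) HC1 0 0 0 c Hc) as [d1 [Hd1 K1]].
assert (HD1 : forall x y e, Rabs x < d1 -> Rabs y < d1 -> Rabs e < d1 -> D1 h x y e <= -c).
{ intros x y e Hx Hy He. assert (A := K1 x y e). rewrite !Rminus_0_r in A.
  specialize (A Hx Hy He). apply Rabs_def2 in A. unfold c in *. lra. }
set (r := d1 / 2). assert (Hr : 0 < r) by (unfold r; lra).
assert (Hhr : forall s, s = r \/ s = - r -> exists D, D <= - c /\ h s 0 0 = D * s).
{ intros s Hs. destruct (mean_value (fun t => h t 0 0) 0 s) as [xi [Hxi E]];
    [intro; eexists; apply is_derive_D1, HP |].
  change (Derive (fun t => h t 0 0) xi) with (D1 h xi 0 0) in E. rewrite h00, !Rminus_0_r in E.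
  assert (Hxi' : Rabs xi < d1) by (apply Rabs_def1; revert Hxi; unfold Rmin, Rmax, r in *;
    destruct Rle_dec; destruct Hs; lra).
  exists (D1 h xi 0 0). split; [| exact E].
  apply HD1; [exact Hxi' | rewrite Rabs_R0; lra | rewrite Rabs_R0; lra]. }
assert (Hpos : 0 < h (- r) 0 0)
  by (destruct (Hhr (- r)) as [D [HD ->]]; [right; reflexivity | nra]).
assert (Hneg : h r 0 0 < 0) by (destruct (Hhr r) as [D [HD ->]]; [left; reflexivity | nra]).
destruct (proj1 (continuous3_ball _) HC (- r) 0 0 _ Hpos) as [dl [Hdl Kl]].
destruct (proj1 (continuous3_ball _) HC r 0 0 (- h r 0 0)) as [dr [Hdr Kr]]; [lra |].
exists r, c, (Rmin (Rmin dl dr) r). split; [exact Hr |]. split; [exact Hc |].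
split; [repeat apply Rmin_pos; assumption |].
pose proof (Rmin_l (Rmin dl dr) r). pose proof (Rmin_r (Rmin dl dr) r).
pose proof (Rmin_l dl dr). pose proof (Rmin_r dl dr).
split.
- intros x y e Hx Hy He. apply HD1; [apply Rabs_le in Hx |..]; unfold r in *; lra.
- intros y e Hy He.
  assert (Al := Kl (- r) y e). assert (Ar := Kr r y e).
  rewrite !Rminus_0_r, Rminus_eq_0, Rabs_R0 in Al, Ar.
  specialize (Al ltac:(lra) ltac:(lra) ltac:(lra)).
  specialize (Ar ltac:(lra) ltac:(lra) ltac:(lra)).
  apply Rabs_def2 in Al, Ar. lra.
Qed.

Lemma smooth_zero_curve (h : fun3) : smooth3 h -> h 0 0 0 = 0 -> D1 h 0 0 0 < 0 ->
  exists rho (p : R -> R -> R), 0 < rho /\ smooth3 (fun _ y e => p y e) /\ p 0 0 = 0 /\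
    forall y e, Rabs y <= rho -> Rabs e <= rho -> h (p y e) y e = 0.
Proof.
intros Sh h00 Hh1.
destruct (local_sign_box h) as [r [c [d [Hr [Hc [Hd [HD1 Hsign]]]]]]];
  auto using smooth3_has_partials, smooth3_continuous, smooth3_D1.
destruct (smooth_cutoff_id (d / 4)) as [sg [Ssg [Hid Hbd]]]; [lra |].
assert (Hsg : forall t, Rabs (sg t) < d) by (intro t; pose proof (Hbd t); lra).
(* With [y] and [e] replaced by [sg y] and [sg e] the hypotheses of the implicit function
   theorem hold for all [(y, e)]; the zero solves [h = 0] where [sg] is the identity. *)
set (HH := fun x y e => h x (sg y) (sg e)).
destruct (smooth_implicit_zero HH r c) as [p [Sp Hp]]; try assumption.
- unfold HH. solve_smooth.
- intros x y e Hx. apply HD1; auto.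
- intros y e. apply Hsign; auto.
- exists (d / 4), p. split; [lra |]. split; [exact Sp |]. split.
  + apply (implicit_unique HH r c (smooth3_has_partials HH ltac:(unfold HH; solve_smooth)) Hc)
      with (y := 0) (e := 0).
    * intros x y e Hx. apply HD1; auto.
    * destruct (Hp 0 0). lra.
    * lra.
    * destruct (Hp 0 0) as [_ ->]. unfold HH.
      rewrite Hid by (rewrite Rabs_R0; lra). now rewrite h00.
  + intros y e Hy He. destruct (Hp y e) as [_ E]. unfold HH in E. now rewrite !Hid in E.
Qed.

Lemma quotient_negative_on_segment (h Df : fun3) a b :
  (forall x, a <= x <= b -> x <> 0 -> x * h x 0 0 < 0) -> Df 0 0 0 < 0 ->
  (forall x, x * Df x 0 0 = h x 0 0) -> forall x, a <= x <= b -> Df x 0 0 < 0.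
Proof.
intros Hsign H0 HDf x Hx. destruct (Req_dec x 0) as [-> | Hx0]; [exact H0 |].
pose proof (Hsign x Hx Hx0) as S. rewrite <- HDf in S.
assert (0 < x * x) by (apply Rsqr_pos_lt, Hx0). nra.
Qed.

Lemma open2_rectangle x1 x2 y1 y2 : open2 (fun x y => x1 < x < x2 /\ y1 < y < y2).
Proof.
intros x y [[Hx1 Hx2] [Hy1 Hy2]].
exists (Rmin (Rmin (x - x1) (x2 - x)) (Rmin (y - y1) (y2 - y))).
split; [repeat apply Rmin_pos; lra |].
intros x' y' H1 H2. apply Rabs_def2 in H1, H2.
pose proof (Rmin_l (Rmin (x - x1) (x2 - x)) (Rmin (y - y1) (y2 - y))).
pose proof (Rmin_r (Rmin (x - x1) (x2 - x)) (Rmin (y - y1) (y2 - y))).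
pose proof (Rmin_l (x - x1) (x2 - x)). pose proof (Rmin_r (x - x1) (x2 - x)).
pose proof (Rmin_l (y - y1) (y2 - y)). pose proof (Rmin_r (y - y1) (y2 - y)).
lra.
Qed.

Definition normal_form_conjugacy (f h : fun3) (eps0 : R) (U : R -> R -> Prop) : Prop :=
  exists (phi1 phi2 K g0 : R -> R -> R -> R) (f0 : R -> R -> R),
    smooth3 phi1 /\ smooth3 phi2 /\ smooth3 K /\
    smooth3 (fun x _ e => f0 x e) /\ smooth3 g0 /\
    g0 0 0 0 = 0 /\
    forall e, 0 <= e < eps0 ->
      (forall x y, U x y -> 0 < K x y e) /\
      (forall x y x' y', U x y -> U x' y' ->
         phi1 x y e = phi1 x' y' e -> phi2 x y e = phi2 x' y' e ->
         x = x' /\ y = y') /\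
      (forall x y, U x y ->
         D1 phi1 x y e * D2 phi2 x y e - D2 phi1 x y e * D1 phi2 x y e <> 0) /\
      (forall x y, U x y ->
         let X := phi1 x y e in
         let Y := phi2 x y e in
         D1 phi1 x y e * (K x y e * (e * f x y e))
           + D2 phi1 x y e * (K x y e * (y * h x y e))
           = e * f0 X e + Y * g0 X Y e /\
         D1 phi2 x y e * (K x y e * (e * f x y e))
           + D2 phi2 x y e * (K x y e * (y * h x y e))
           = - X * Y).

Lemma shear_partials (p : R -> R -> R) : has_partials3 (fun _ y e => p y e) -> forall x y e,
  D1 (fun x y e => x - p y e) x y e = 1 /\
  D2 (fun x y e => x - p y e) x y e = - D2 (fun _ y e => p y e) x y e /\
  D1 (fun _ y _ => y) x y e = 0 /\ D2 (fun _ y _ => y) x y e = 1.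
Proof.
intros HP x y e. repeat split; apply is_derive_unique; try solve_derive.
replace (- D2 _ x y e) with (0 - D2 (fun _ y e => p y e) x y e) by ring.
apply (is_derive_minus (fun _ => x) (fun t => p t e));
  [solve_derive | apply (is_derive_D2 (fun _ y e => p y e)), HP].
Qed.

Lemma normal_form_of_rescaling (f h K : fun3) (p : R -> R -> R) eps0 (U : R -> R -> Prop) :
  smooth3 f -> smooth3 K -> smooth3 (fun _ y e => p y e) ->
  (forall e x y, 0 <= e < eps0 -> U x y -> 0 < K x y e /\ K x y e * h x y e = - (x - p y e)) ->
  normal_form_conjugacy f h eps0 U.
Proof.
intros Sf SK Sp HK.
set (P := fun (_ y e : R) => p y e).
set (A := fun X Y e => K (X + P X Y e) Y e * f (X + P X Y e) Y e).
destruct (hadamard_quotient (fun Y X e => A X Y e) (fun _ _ => 0)) as [M [SM [HM _]]];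
  [unfold A; solve_smooth | solve_smooth |].
assert (SP2 : smooth3 (D2 P)) by (apply smooth3_D2, Sp).
exists (fun x y e => x - p y e), (fun _ y _ => y), K,
  (fun X Y e => e * M Y X e + D2 P X Y e * X), (fun X e => A X 0 e).
split; [solve_smooth |]. split; [solve_smooth |]. split; [exact SK |].
split; [unfold A; solve_smooth |]. split; [solve_smooth |]. split; [ring |].
intros e He. split; [| split; [| split]].
- intros x y HU. now apply HK.
- intros x y x' y' _ _ E1 E2. subst y'. split; [lra | reflexivity].
- intros x y _.
  destruct (shear_partials p (smooth3_has_partials _ Sp) x y e) as [-> [-> [-> ->]]]. lra.
- intros x y HU. cbv zeta.
  destruct (shear_partials p (smooth3_has_partials _ Sp) x y e) as [-> [-> [-> ->]]]. fold P.
  destruct (HK e x y He HU) as [_ KH].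
  assert (HMy := HM y (x - p y e) e).
  change (A (x - p y e) y e) with (K (x - p y e + p y e) y e * f (x - p y e + p y e) y e) in HMy.
  replace (x - p y e + p y e) with x in HMy by ring. rewrite Rminus_0_r in HMy.
  change (D2 P (x - p y e) y e) with (D2 P x y e).
  replace (K x y e * (y * h x y e)) with (y * (K x y e * h x y e)) by ring.
  rewrite KH. split; [| ring].
  replace (y * (e * M y (x - p y e) e + D2 P x y e * (x - p y e)))
    with (e * (y * M y (x - p y e) e) + y * D2 P x y e * (x - p y e)) by ring.
  rewrite HMy. ring.
Qed.

Theorem lemma2p1 (a b : R) (f h : R -> R -> R -> R) :
  a < 0 -> 0 < b ->
  smooth3 f -> smooth3 h ->
  (forall x, a <= x <= b -> x <> 0 -> x * h x 0 0 < 0) ->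
  D1 h 0 0 0 < 0 ->
  exists eps0 : R, 0 < eps0 /\
  exists (U : R -> R -> Prop),
    open2 U /\ (forall x, a <= x <= b -> U x 0) /\
  exists (phi1 phi2 K g0 : R -> R -> R -> R) (f0 : R -> R -> R),
    smooth3 phi1 /\ smooth3 phi2 /\ smooth3 K /\
    smooth3 (fun x _ e => f0 x e) /\ smooth3 g0 /\
    g0 0 0 0 = 0 /\
    forall e, 0 <= e < eps0 ->
      (forall x y, U x y -> 0 < K x y e) /\
      (forall x y x' y', U x y -> U x' y' ->
         phi1 x y e = phi1 x' y' e -> phi2 x y e = phi2 x' y' e ->
         x = x' /\ y = y') /\
      (forall x y, U x y ->
         D1 phi1 x y e * D2 phi2 x y e - D2 phi1 x y e * D1 phi2 x y e <> 0) /\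
      (forall x y, U x y ->
         let X := phi1 x y e in
         let Y := phi2 x y e in
         D1 phi1 x y e * (K x y e * (e * f x y e))
           + D2 phi1 x y e * (K x y e * (y * h x y e))
           = e * f0 X e + Y * g0 X Y e /\
         D1 phi2 x y e * (K x y e * (e * f x y e))
           + D2 phi2 x y e * (K x y e * (y * h x y e))
           = - X * Y).
Proof.
intros Ha Hb Sf Sh Hsign Hh1.
assert (h00 : h 0 0 0 = 0).
{ apply (zero_of_sign_change (fun x => h x 0 0) a b);
    auto using continuous_line1, smooth3_continuous. }
destruct (smooth_zero_curve h Sh h00 Hh1) as [rho [p [Hrho [Sp [p00 Hp]]]]].
destruct (hadamard_quotient h p Sh Sp) as [Df [SDf [HDf Hdiag]]].
assert (Dneg : forall x, a <= x <= b -> Df x 0 0 < 0).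
{ assert (E0 := Hdiag 0 0). assert (E1 := fun x => HDf x 0 0). rewrite p00 in E0, E1.
  apply (quotient_negative_on_segment h Df a b Hsign); [rewrite E0; exact Hh1 |].
  intros x. specialize (E1 x). rewrite h00, !Rminus_0_r in E1. exact E1. }
destruct (negative_near_segment Df a b) as [c [d [Hc [Hd Htube]]]];
  auto using smooth3_continuous; [lra |].
destruct (smooth_reciprocal c Hc) as [Rs [SRs HRs]].
set (del := Rmin d rho / 2).
assert (Hdel : 0 < del /\ del < d /\ del < rho).
{ pose proof (Rmin_l d rho). pose proof (Rmin_r d rho). pose proof (Rmin_pos d rho Hd Hrho).
  unfold del. lra. }
exists del. split; [apply Hdel |].
exists (fun x y => a - del < x < b + del /\ - del < y < del).
split; [apply open2_rectangle | split; [intros x Hx; lra |]].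
apply (normal_form_of_rescaling f h (fun x y e => - Rs (Df x y e)) p);
  [exact Sf | solve_smooth | exact Sp |].
intros e x y He [Hx Hy].
assert (HD : Df x y e <= - c) by (apply Htube; [| apply Rabs_def1 ..]; lra).
rewrite HRs by exact HD.
split; [apply Ropp_0_gt_lt_contravar, Rinv_lt_0_compat; lra |].
assert (E := HDf x y e). rewrite Hp in E by (apply Rabs_le; lra).
rewrite Rminus_0_r in E. rewrite <- E. field. lra.
Qed.
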